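(* Let $\kappa,\theta,\sigma>0$ and $\chi>\gamma>0$ be constants. Define $$\xi:=\sqrt{\kappa^2+2\sigma^2(\chi-\gamma)},\quad \alpha:=\frac{\kappa\theta}{\sigma^2}\Big(1-\frac{\kappa}{\xi}\Big),\quad \beta:=\frac{2\kappa\theta}{\sigma^2},\quad \zeta:=\frac{2\xi}{\sigma^2},\quad \nu:=\frac{\alpha\zeta}{\beta}=\frac{\xi-\kappa}{\sigma^2},$$ and for $r\in(0,\infty)$ let $$u_+(r):=e^{-\nu r}M(\alpha,\beta,\zeta r),\qquad u_-(r):=e^{-\nu r}U(\alpha,\beta,\zeta r).$$ Then $u_+$ is increasing on $(0,\infty)$ and $u_-$ is decreasing on $(0,\infty)$.
   Context: $M$ and $U$ denote the confluent hypergeometric (Kummer) functions of the first and second kind: $M(a,b,z)=\sum_{n\ge 0}\frac{(a)_n}{(b)_n}\frac{z^n}{n!}$ with $(a)_n=a(a+1)\cdots(a+n-1)$ the Pochhammer symbol, and for $a>0$, $U(a,b,z)=\frac{1}{\Gamma(a)}\int_0^\infty e^{-zt}t^{a-1}(1+t)^{b-a-1}\,dt$ for $z>0$. The functions $u_\pm$ are solutions of the ODE $\kappa(\theta-r)u'(r)+\tfrac12\sigma^2 r\,u''(r)-(\chi-\gamma)r\,u(r)=0$ on $(0,\infty)$, arising from a Cox–Ingersoll–Ross process $dR_t=\kappa(\theta-R_t)dt+\sigma\sqrt{R_t}\,dW_t$. *)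

From Stdlib Require Import Reals Arith.
From Coquelicot Require Import Coquelicot.
Open Scope R_scope.

Fixpoint poch (a : R) (n : nat) : R :=
  match n with
  | O => 1
  | S k => poch a k * (a + INR k)
  end.

Definition kummerM (a b z : R) : R :=
  Series (fun n => poch a n / poch b n * z ^ n / INR (Factorial.fact n)).

Definition GammaF (a : R) : R :=
  RInt_gen (fun t => Rpower t (a - 1) * exp (- t))
           (at_right 0) (Rbar_locally p_infty).

(* Kummer's function of the second kind (Tricomi), integral representation
   valid for a > 0, z > 0:
   U(a,b,z) = 1/Gamma(a) int_0^oo e^(-z t) t^(a-1) (1+t)^(b-a-1) dt. *)
Definition kummerU (a b z : R) : R :=
  / GammaF a *
  RInt_gen (fun t => exp (- (z * t)) * Rpower t (a - 1) * Rpower (1 + t) (b - a - 1))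
           (at_right 0) (Rbar_locally p_infty).

(* With nu = a z / b, the relation M'(a,b,.) = (a/b) M(a+1,b+1,.) gives
   d/dr [exp(-nu r) M(a,b,z r)] = nu exp(-nu r) (M(a+1,b+1,z r) - M(a,b,z r)),
   and for 0 < a < b each Taylor coefficient of M(a+1,b+1,.) dominates that of
   M(a,b,.) (by the factor b(a+n) / (a(b+n)) >= 1, strictly at n = 1); here
   a = alpha < beta = b because kappa < xi.
   For U, the integrand exp(-z t) t^(a-1) (1+t)^(b-a-1) decreases in z, so U is
   positive and nonincreasing in z, while exp(-nu r) decreases strictly.  The
   improper integrals are suprema of partial integrals; these are bounded since
   exp(-z t) (1+t)^(p+q+1) is bounded, leaving the beta-prime density
   t^(p-1) (1+t)^(-p-1), whose primitive (t/(1+t))^p / p is at most 1/p. *)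

From Stdlib Require Import Reals Lra Classical FunctionalExtensionality.
From Coquelicot Require Import Coquelicot.
Open Scope R_scope.

Lemma exp_le_exp (x y : R) : x <= y -> exp x <= exp y.
Proof. intros [Hlt | ->]; [apply Rlt_le, exp_increasing, Hlt | apply Rle_refl]. Qed.

Lemma Series_ge0 (e : nat -> R) :
  ex_series e -> (forall n, 0 <= e n) -> 0 <= Series e.
Proof.
  intros He He0.
  replace 0 with (Series (fun n => 0 * e n)) by (rewrite Series_scal_l; ring).
  apply Series_le; [intros n; rewrite Rmult_0_l; split; [lra | apply He0] | exact He].
Qed.

Lemma Series_gt0 (e : nat -> R) (k : nat) :
  ex_series e -> (forall n, 0 <= e n) -> 0 < e k -> 0 < Series e.
Proof.
  revert e; induction k as [|k IHk]; intros e He He0 Hek;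
    rewrite Series_incr_1 by exact He;
    assert (Htail : ex_series (fun n => e (S n))) by exact (proj1 (ex_series_incr_1 e) He).
  - pose proof (Series_ge0 _ Htail (fun n => He0 (S n))). lra.
  - pose proof (IHk _ Htail (fun n => He0 (S n)) Hek). pose proof (He0 O). lra.
Qed.

Lemma PSeries_lt (a b : nat -> R) (x : R) (k : nat) :
  ex_pseries a x -> ex_pseries b x -> 0 < x ->
  (forall n, a n <= b n) -> a k < b k -> PSeries a x < PSeries b x.
Proof.
  intros Ha Hb Hx Hab Habk.
  apply Rlt_0_minus.
  rewrite <- PSeries_minus by assumption.
  apply (Series_gt0 _ k).
  - eapply ex_series_ext; [|exact (ex_pseries_minus b a x Hb Ha)].
    intros n; simpl. rewrite pow_n_pow. apply Rmult_comm.
  - intros n. unfold PS_minus, plus, opp; simpl.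
    specialize (Hab n). apply Rmult_le_pos; [lra | apply pow_le; lra].
  - unfold PS_minus, plus, opp; simpl.
    apply Rmult_lt_0_compat; [lra | apply pow_lt; lra].
Qed.

Lemma poch_gt0 (a : R) (n : nat) : 0 < a -> 0 < poch a n.
Proof.
  intros Ha; induction n as [|n IHn]; simpl; [lra|].
  pose proof (pos_INR n). apply Rmult_lt_0_compat; lra.
Qed.

Lemma poch_succ (a : R) (n : nat) : poch a (S n) = a * poch (a + 1) n.
Proof.
  induction n as [|n IHn]; [simpl; ring|].
  change (poch a (S (S n))) with (poch a (S n) * (a + INR (S n))).
  rewrite IHn, S_INR. simpl. ring.
Qed.

Lemma INR_fact_gt0 (n : nat) : 0 < INR (Factorial.fact n).
Proof. apply lt_0_INR, Factorial.lt_O_fact. Qed.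

Definition kummer_coef (a b : R) (n : nat) : R :=
  poch a n / poch b n / INR (Factorial.fact n).

Lemma kummerM_PSeries (a b z : R) : kummerM a b z = PSeries (kummer_coef a b) z.
Proof. apply Series_ext; intros n. unfold kummer_coef, Rdiv. ring. Qed.

Lemma kummer_coef_gt0 (a b : R) (n : nat) : 0 < a -> 0 < b -> 0 < kummer_coef a b n.
Proof.
  intros Ha Hb. pose proof (INR_fact_gt0 n).
  unfold kummer_coef. apply Rdiv_lt_0_compat; [apply Rdiv_lt_0_compat|]; auto using poch_gt0.
Qed.

Lemma kummer_coef_ratio (a b : R) (n : nat) : 0 < a -> 0 < b ->
  kummer_coef a b (S n) / kummer_coef a b n = (a + INR n) / ((b + INR n) * INR (S n)).
Proof.
  intros Ha Hb. pose proof (poch_gt0 a n Ha). pose proof (poch_gt0 b n Hb).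
  pose proof (INR_fact_gt0 n). pose proof (pos_INR n).
  unfold kummer_coef. simpl poch. rewrite fact_simpl, mult_INR, S_INR.
  field. repeat split; lra.
Qed.

Lemma CV_radius_kummer_coef (a b : R) : 0 < a -> 0 < b -> CV_radius (kummer_coef a b) = p_infty.
Proof.
  intros Ha Hb. apply CV_radius_infinite_DAlembert.
  { intros n. pose proof (kummer_coef_gt0 a b n Ha Hb). lra. }
  apply is_lim_seq_le_le with (fun _ => 0) (fun n => (1 + a / b) / INR (S n)).
  - intros n. rewrite kummer_coef_ratio, S_INR by assumption.
    pose proof (pos_INR n).
    assert (Hab : (a + INR n) / (b + INR n) <= 1 + a / b).
    { apply Rle_div_l; [lra|]. unfold Rdiv. rewrite Rmult_plus_distr_r.
      field_simplify; [|lra]. apply Rle_div_r; [lra|]. nra. }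
    rewrite Rabs_pos_eq by (apply Rdiv_le_0_compat; nra).
    split; [apply Rdiv_le_0_compat; nra|].
    replace ((a + INR n) / ((b + INR n) * (INR n + 1)))
      with ((a + INR n) / (b + INR n) / (INR n + 1)) by (field; lra).
    apply Rmult_le_compat_r; [apply Rlt_le, Rinv_0_lt_compat; lra | exact Hab].
  - apply is_lim_seq_const.
  - replace (Finite 0) with (Rbar_mult (1 + a / b) (Rbar_inv p_infty)) by (simpl; f_equal; ring).
    apply is_lim_seq_scal_l, is_lim_seq_inv; [|discriminate].
    apply (is_lim_seq_incr_1 INR), is_lim_seq_INR.
Qed.

Lemma ex_pseries_kummer_coef (a b z : R) : 0 < a -> 0 < b -> ex_pseries (kummer_coef a b) z.
Proof. intros Ha Hb. apply CV_radius_inside. now rewrite CV_radius_kummer_coef. Qed.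

Lemma PS_derive_kummer_coef (a b : R) (n : nat) : 0 < a -> 0 < b ->
  PS_derive (kummer_coef a b) n = a / b * kummer_coef (a + 1) (b + 1) n.
Proof.
  intros Ha Hb. pose proof (poch_gt0 (a + 1) n ltac:(lra)).
  pose proof (poch_gt0 (b + 1) n ltac:(lra)). pose proof (INR_fact_gt0 n). pose proof (pos_INR n).
  unfold PS_derive, kummer_coef. rewrite !poch_succ, fact_simpl, mult_INR, S_INR.
  field. repeat split; lra.
Qed.

Lemma is_derive_kummerM (a b z : R) : 0 < a -> 0 < b ->
  is_derive (kummerM a b) z (a / b * kummerM (a + 1) (b + 1) z).
Proof.
  intros Ha Hb.
  apply is_derive_ext with (PSeries (kummer_coef a b)); [intros t; symmetry; apply kummerM_PSeries|].
  replace (a / b * kummerM (a + 1) (b + 1) z) with (PSeries (PS_derive (kummer_coef a b)) z).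
  - apply is_derive_PSeries. now rewrite CV_radius_kummer_coef.
  - rewrite kummerM_PSeries. unfold PSeries. rewrite <- Series_scal_l.
    apply Series_ext; intros n. rewrite PS_derive_kummer_coef by assumption. ring.
Qed.

Lemma kummer_coef_shift (a b : R) (n : nat) : 0 < a -> 0 < b ->
  kummer_coef (a + 1) (b + 1) n * (a * (b + INR n)) = kummer_coef a b n * (b * (a + INR n)).
Proof.
  intros Ha Hb. pose proof (poch_gt0 (a + 1) n ltac:(lra)).
  pose proof (poch_gt0 (b + 1) n ltac:(lra)). pose proof (INR_fact_gt0 n). pose proof (pos_INR n).
  assert (Hsucc : forall c, poch c n * (c + INR n) = c * poch (c + 1) n)
    by (intros c; rewrite <- poch_succ; reflexivity).
  assert (Hpa : poch a n = a * poch (a + 1) n / (a + INR n)) by (rewrite <- Hsucc; field; lra).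
  assert (Hpb : poch b n = b * poch (b + 1) n / (b + INR n)) by (rewrite <- Hsucc; field; lra).
  unfold kummer_coef. rewrite Hpa, Hpb. field. repeat split; lra.
Qed.

Lemma kummer_coef_le_shift (a b : R) (n : nat) : 0 < a -> a <= b ->
  kummer_coef a b n <= kummer_coef (a + 1) (b + 1) n.
Proof.
  intros Ha Hab. pose proof (pos_INR n).
  pose proof (kummer_coef_shift a b n Ha ltac:(lra)) as Hshift.
  pose proof (kummer_coef_gt0 a b n Ha ltac:(lra)).
  pose proof (kummer_coef_gt0 (a + 1) (b + 1) n ltac:(lra) ltac:(lra)).
  apply Rmult_le_reg_r with (a * (b + INR n)); [nra|].
  rewrite Hshift. apply Rmult_le_compat_l; nra.
Qed.

Lemma kummerM_lt_shift (a b z : R) : 0 < a -> a < b -> 0 < z ->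
  kummerM a b z < kummerM (a + 1) (b + 1) z.
Proof.
  intros Ha Hab Hz. rewrite !kummerM_PSeries.
  apply (PSeries_lt _ _ _ 1); [| |exact Hz| |].
  - apply ex_pseries_kummer_coef; lra.
  - apply ex_pseries_kummer_coef; lra.
  - intros n. apply kummer_coef_le_shift; lra.
  - unfold kummer_coef; simpl. apply Rmult_lt_reg_r with (b * (b + 1)); [nra|].
    field_simplify; lra.
Qed.

Lemma exp_kummerM_increasing (a b z r s : R) : 0 < a -> a < b -> 0 < z -> 0 < r -> r < s ->
  exp (- (a * z / b * r)) * kummerM a b (z * r) < exp (- (a * z / b * s)) * kummerM a b (z * s).
Proof.
  intros Ha Hab Hz Hr Hrs.
  set (nu := a * z / b).
  assert (Hnu : 0 < nu) by (apply Rdiv_lt_0_compat; nra).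
  apply (incr_function (fun x => exp (- (nu * x)) * kummerM a b (z * x)) 0 p_infty
    (fun x => nu * exp (- (nu * x)) * (kummerM (a + 1) (b + 1) (z * x) - kummerM a b (z * x))));
    simpl; [|intros x Hx _ |lra|lra|exact I].
  - intros x _ _.
    assert (Hexp : is_derive (fun x => exp (- (nu * x))) x (- nu * exp (- (nu * x))))
      by (auto_derive; [exact I | ring]).
    assert (HM : is_derive (fun x => kummerM a b (z * x)) x
                   (z * (a / b * kummerM (a + 1) (b + 1) (z * x)))).
    { apply (is_derive_comp (kummerM a b) (fun t => z * t)).
      - apply is_derive_kummerM; lra.
      - auto_derive; [exact I | ring]. }
    pose proof (is_derive_mult _ _ x _ _ Hexp HM ltac:(intros; apply Rmult_comm)) as Hprod.
    replace (nu * exp (- (nu * x)) * _) with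
      (plus (mult (- nu * exp (- (nu * x))) (kummerM a b (z * x)))
            (mult (exp (- (nu * x))) (z * (a / b * kummerM (a + 1) (b + 1) (z * x))))).
    + exact Hprod.
    + unfold plus, mult; simpl. unfold nu. field. lra.
  - apply Rmult_lt_0_compat; [apply Rmult_lt_0_compat; [exact Hnu | apply exp_pos]|].
    apply Rlt_0_minus, kummerM_lt_shift; nra.
Qed.

Section NonnegativeImproperIntegral.

Variable f : R -> R.
Hypothesis f_ge0 : forall t, 0 < t -> 0 <= f t.
Hypothesis f_cont : forall t, 0 < t -> continuous f t.

Definition partial_integrals (v : R) : Prop :=
  exists a b, 0 < a <= b /\ v = RInt f a b.

Lemma ex_RInt_pos_interval (a b : R) : 0 < a -> 0 < b -> ex_RInt f a b.
Proof.
  intros Ha Hb. apply (@ex_RInt_continuous R_CompleteNormedModule).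
  intros t Ht. apply f_cont. pose proof (Rmin_glb_lt a b 0 Ha Hb). lra.
Qed.

Lemma RInt_le_widen (a' a b b' : R) : 0 < a' -> a' <= a -> a <= b -> b <= b' ->
  RInt f a b <= RInt f a' b'.
Proof.
  intros Ha' Ha'a Hab Hbb'.
  rewrite <- (RInt_Chasles f a' a b') by (apply ex_RInt_pos_interval; lra).
  rewrite <- (RInt_Chasles f a b b') by (apply ex_RInt_pos_interval; lra).
  assert (0 <= RInt f a' a)
    by (apply RInt_ge_0; [lra | apply ex_RInt_pos_interval; lra | intros; apply f_ge0; lra]).
  assert (0 <= RInt f b b')
    by (apply RInt_ge_0; [lra | apply ex_RInt_pos_interval; lra | intros; apply f_ge0; lra]).
  unfold plus; simpl. lra.
Qed.

(* Partial integrals grow as [a] decreases and [b] increases, so they converge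
   to their supremum along [at_right 0] x [+oo]. *)
Lemma is_RInt_gen_lub (L : R) : is_lub partial_integrals L ->
  is_RInt_gen f (at_right 0) (Rbar_locally p_infty) L.
Proof.
  intros [Hub Hlub] P [eps HP].
  assert (Happrox : exists a0 b0, 0 < a0 <= b0 /\ L - eps < RInt f a0 b0).
  { apply NNPP; intros Hnone.
    assert (L <= L - eps).
    { apply Hlub. intros v [a [b [Hab ->]]]. apply Rnot_lt_le. intros Hlt.
      apply Hnone. exists a, b. auto. }
    pose proof (cond_pos eps). lra. }
  destruct Happrox as [a0 [b0 [Hab0 Hlt]]].
  apply Filter_prod with (fun a => 0 < a < a0) (fun b => b0 < b).
  - exists (mkposreal a0 (proj1 Hab0)). intros y Hy Hy0.
    change (Rabs (y - 0) < a0) in Hy. rewrite Rminus_0_r, Rabs_pos_eq in Hy; lra.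
  - exists b0. auto.
  - intros x y Hx Hy. exists (RInt f x y). split.
    + apply (@RInt_correct R_CompleteNormedModule), ex_RInt_pos_interval; lra.
    + apply HP. change (Rabs (RInt f x y - L) < eps).
      assert (RInt f a0 b0 <= RInt f x y) by (apply RInt_le_widen; lra).
      assert (RInt f x y <= L) by (apply Hub; exists x, y; split; [lra | reflexivity]).
      apply Rabs_def1; lra.
Qed.

Lemma RInt_gen_is_lub (M : R) : (forall a b, 0 < a <= b -> RInt f a b <= M) ->
  is_lub partial_integrals (RInt_gen f (at_right 0) (Rbar_locally p_infty)).
Proof.
  intros HM.
  destruct (completeness partial_integrals) as [L HL].
  - exists M. intros v [a [b [Hab ->]]]. auto.
  - exists (RInt f 1 1), 1, 1. split; [lra | reflexivity].
  - now rewrite (is_RInt_gen_unique _ _ (is_RInt_gen_lub L HL)).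
Qed.

End NonnegativeImproperIntegral.

Lemma RInt_gen_gt0 (f : R -> R) (M : R) :
  (forall t, 0 < t -> 0 < f t) -> (forall t, 0 < t -> continuous f t) ->
  (forall a b, 0 < a <= b -> RInt f a b <= M) ->
  0 < RInt_gen f (at_right 0) (Rbar_locally p_infty).
Proof.
  intros Hpos Hcont HM.
  assert (Hge0 : forall t, 0 < t -> 0 <= f t) by (intros t Ht; apply Rlt_le, Hpos, Ht).
  destruct (RInt_gen_is_lub f Hge0 Hcont M HM) as [Hub _].
  apply Rlt_le_trans with (RInt f 1 2).
  - apply RInt_gt_0; [lra | intros; apply Hpos; lra | intros; apply Hcont; lra].
  - apply Hub. exists 1, 2. split; [lra | reflexivity].
Qed.

Lemma RInt_gen_le (f g : R -> R) (M : R) :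
  (forall t, 0 < t -> 0 <= f t <= g t) ->
  (forall t, 0 < t -> continuous f t) -> (forall t, 0 < t -> continuous g t) ->
  (forall a b, 0 < a <= b -> RInt g a b <= M) ->
  RInt_gen f (at_right 0) (Rbar_locally p_infty) <= RInt_gen g (at_right 0) (Rbar_locally p_infty).
Proof.
  intros Hfg Hfc Hgc HM.
  assert (Hf0 : forall t, 0 < t -> 0 <= f t) by (intros t Ht; apply Hfg, Ht).
  assert (Hg0 : forall t, 0 < t -> 0 <= g t) by (intros t Ht; pose proof (Hfg t Ht); lra).
  assert (Hle : forall a b, 0 < a <= b -> RInt f a b <= RInt g a b).
  { intros a b Hab. apply RInt_le; [lra | apply ex_RInt_pos_interval; auto; lra
      | apply ex_RInt_pos_interval; auto; lra | intros t Ht; apply Hfg; lra]. }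
  destruct (RInt_gen_is_lub g Hg0 Hgc M HM) as [Hubg _].
  assert (Hubf : forall a b, 0 < a <= b -> RInt f a b <= RInt_gen g (at_right 0) (Rbar_locally p_infty)).
  { intros a b Hab. apply Rle_trans with (RInt g a b); [now apply Hle|].
    apply Hubg. exists a, b. split; [exact Hab | reflexivity]. }
  apply (RInt_gen_is_lub f Hf0 Hfc _ Hubf).
  intros v [a [b [Hab ->]]]. now apply Hubf.
Qed.

Definition kummerU_kernel (z p q t : R) : R :=
  exp (- (z * t)) * Rpower t (p - 1) * Rpower (1 + t) q.

Definition beta_prime_kernel (p t : R) : R := Rpower t (p - 1) * Rpower (1 + t) (- p - 1).

Lemma kummerU_kernel_gt0 (z p q t : R) : 0 < kummerU_kernel z p q t.
Proof. unfold kummerU_kernel, Rpower. repeat apply Rmult_lt_0_compat; apply exp_pos. Qed.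

Lemma kummerU_kernel_continuous (z p q t : R) : 0 < t -> continuous (kummerU_kernel z p q) t.
Proof.
  intros Ht. apply (@ex_derive_continuous R_AbsRing R_NormedModule).
  unfold kummerU_kernel, Rpower. auto_derive. lra.
Qed.

Lemma beta_prime_kernel_continuous (p t : R) : 0 < t -> continuous (beta_prime_kernel p) t.
Proof.
  intros Ht. apply (@ex_derive_continuous R_AbsRing R_NormedModule).
  unfold beta_prime_kernel, Rpower. auto_derive. lra.
Qed.

Lemma is_derive_beta_prime_primitive (p t : R) : 0 < p -> 0 < t ->
  is_derive (fun t => Rpower (t / (1 + t)) p / p) t (beta_prime_kernel p t).
Proof.
  intros Hp Ht. unfold beta_prime_kernel, Rpower.
  auto_derive; [repeat split; [lra | apply Rdiv_lt_0_compat; lra]|].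
  change (t * / (1 + t)) with (t / (1 + t)). rewrite ln_div by lra.
  set (A := exp (p * ln t)). set (B := exp (p * ln (1 + t))).
  assert (HB : 0 < B) by apply exp_pos.
  replace (p * (ln t - ln (1 + t))) with (p * ln t + - (p * ln (1 + t))) by ring.
  replace ((p - 1) * ln t) with (p * ln t + - ln t) by ring.
  replace ((- p - 1) * ln (1 + t)) with (- (p * ln (1 + t)) + - ln (1 + t)) by ring.
  rewrite !exp_plus, !exp_Ropp, !exp_ln by lra. fold A B.
  field. repeat split; lra.
Qed.

Lemma RInt_beta_prime_kernel_le (p a b : R) : 0 < p -> 0 < a <= b ->
  RInt (beta_prime_kernel p) a b <= / p.
Proof.
  intros Hp Hab.
  set (h := fun t => Rpower (t / (1 + t)) p / p).
  assert (Hmin : 0 < Rmin a b) by (apply Rmin_glb_lt; lra).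
  rewrite (is_RInt_unique _ _ _ (h b - h a)).
  2:{ apply (is_RInt_derive h).
      - intros t Ht. apply is_derive_beta_prime_primitive; lra.
      - intros t Ht. apply beta_prime_kernel_continuous. lra. }
  assert (Hha : 0 < h a).
  { apply Rdiv_lt_0_compat; [apply exp_pos | exact Hp]. }
  assert (Hhb : h b <= / p).
  { unfold h, Rdiv. rewrite <- (Rmult_1_l (/ p)) at 2. apply Rmult_le_compat_r.
    - apply Rlt_le, Rinv_0_lt_compat, Hp.
    - assert (Hln : ln (b / (1 + b)) <= 0).
      { rewrite <- ln_1. apply ln_le; [apply Rdiv_lt_0_compat; lra|]. apply Rle_div_l; lra. }
      unfold Rpower. rewrite <- exp_0 at 2. apply exp_le_exp. nra.
  }
  lra.
Qed.

Lemma ln_1p_mul_sub_le (z K t : R) : 0 < z -> 0 < K -> 0 <= t ->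
  K * ln (1 + t) - z * t <= z - K - K * ln (z / K).
Proof.
  intros Hz HK Ht.
  assert (Hc : 0 < z / K) by (apply Rdiv_lt_0_compat; lra).
  assert (Hln : ln (z / K) + ln (1 + t) <= z / K * (1 + t) - 1).
  { rewrite <- ln_mult by lra. pose proof (exp_ineq1_le (ln (z / K * (1 + t)))) as Hexp.
    rewrite exp_ln in Hexp by (apply Rmult_lt_0_compat; lra). lra. }
  apply Rmult_le_compat_l with (r := K) in Hln; [|lra].
  replace (K * (z / K * (1 + t) - 1)) with (z * (1 + t) - K) in Hln by (field; lra).
  lra.
Qed.

Lemma kummerU_kernel_le_beta_prime (z p q : R) : 0 < z ->
  exists C, 0 < C /\ forall t, 0 < t -> kummerU_kernel z p q t <= C * beta_prime_kernel p t.
Proof.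
  intros Hz.
  set (K := Rabs (p + q + 1) + 1).
  assert (HK : 0 < K) by (pose proof (Rabs_pos (p + q + 1)); unfold K; lra).
  exists (exp (z - K - K * ln (z / K))). split; [apply exp_pos|]. intros t Ht.
  assert (Hln : 0 <= ln (1 + t)) by (rewrite <- ln_1; apply ln_le; lra).
  assert (Hexpo : (p + q + 1) * ln (1 + t) <= K * ln (1 + t))
    by (apply Rmult_le_compat_r; [exact Hln | pose proof (Rle_abs (p + q + 1)); unfold K; lra]).
  pose proof (ln_1p_mul_sub_le z K t Hz HK ltac:(lra)).
  unfold kummerU_kernel, beta_prime_kernel, Rpower. rewrite <- !exp_plus.
  apply exp_le_exp. clearbody K. lra.
Qed.

Lemma RInt_kummerU_kernel_bounded (z p q : R) : 0 < z -> 0 < p ->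
  exists M, forall a b, 0 < a <= b -> RInt (kummerU_kernel z p q) a b <= M.
Proof.
  intros Hz Hp.
  destruct (kummerU_kernel_le_beta_prime z p q Hz) as [C [HC Hdom]].
  exists (C / p). intros a b Hab.
  assert (Hex : ex_RInt (beta_prime_kernel p) a b).
  { apply (ex_RInt_pos_interval _ (fun t Ht => beta_prime_kernel_continuous p t Ht)); lra. }
  assert (Hscal : RInt (fun t => C * beta_prime_kernel p t) a b = C * RInt (beta_prime_kernel p) a b)
    by exact (RInt_scal _ _ _ C Hex).
  apply Rle_trans with (RInt (fun t => C * beta_prime_kernel p t) a b).
  - apply RInt_le; [lra | | exact (ex_RInt_scal _ _ _ C Hex) | ].
    + apply (ex_RInt_pos_interval _ (kummerU_kernel_continuous z p q)); lra.
    + intros t Ht. apply Hdom; lra.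
  - rewrite Hscal. unfold Rdiv. apply Rmult_le_compat_l; [lra |].
    apply RInt_beta_prime_kernel_le; lra.
Qed.

Lemma RInt_gen_kummerU_kernel_gt0 (z p q : R) : 0 < z -> 0 < p ->
  0 < RInt_gen (kummerU_kernel z p q) (at_right 0) (Rbar_locally p_infty).
Proof.
  intros Hz Hp. destruct (RInt_kummerU_kernel_bounded z p q Hz Hp) as [M HM].
  apply (RInt_gen_gt0 _ M); [intros; apply kummerU_kernel_gt0 | apply kummerU_kernel_continuous | exact HM].
Qed.

Lemma GammaF_gt0 (a : R) : 0 < a -> 0 < GammaF a.
Proof.
  intros Ha.
  replace (GammaF a) with (RInt_gen (kummerU_kernel 1 a 0) (at_right 0) (Rbar_locally p_infty)).
  - apply RInt_gen_kummerU_kernel_gt0; lra.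
  - unfold GammaF. f_equal. apply functional_extensionality. intros t.
    unfold kummerU_kernel. replace (Rpower (1 + t) 0) with 1
      by (unfold Rpower; rewrite Rmult_0_l, exp_0; reflexivity).
    rewrite Rmult_1_l. ring.
Qed.

Lemma kummerU_gt0 (a b z : R) : 0 < a -> 0 < z -> 0 < kummerU a b z.
Proof.
  intros Ha Hz. apply Rmult_lt_0_compat.
  - apply Rinv_0_lt_compat, GammaF_gt0, Ha.
  - apply (RInt_gen_kummerU_kernel_gt0 z a (b - a - 1)); assumption.
Qed.

Lemma kummerU_antitone (a b z1 z2 : R) : 0 < a -> 0 < z1 <= z2 ->
  kummerU a b z2 <= kummerU a b z1.
Proof.
  intros Ha [Hz1 Hz12].
  apply Rmult_le_compat_l; [apply Rlt_le, Rinv_0_lt_compat, GammaF_gt0, Ha|].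
  destruct (RInt_kummerU_kernel_bounded z1 a (b - a - 1) Hz1 Ha) as [M HM].
  apply (RInt_gen_le (kummerU_kernel z2 a (b - a - 1)) (kummerU_kernel z1 a (b - a - 1)) M);
    [| apply kummerU_kernel_continuous | apply kummerU_kernel_continuous | exact HM].
  intros t Ht. split; [apply Rlt_le, kummerU_kernel_gt0|].
  unfold kummerU_kernel. apply Rmult_le_compat_r; [unfold Rpower; apply Rlt_le, exp_pos|].
  apply Rmult_le_compat_r; [unfold Rpower; apply Rlt_le, exp_pos|].
  apply exp_le_exp. nra.
Qed.

Lemma exp_kummerU_decreasing (a b nu z r s : R) : 0 < a -> 0 < nu -> 0 < z -> 0 < r -> r < s ->
  exp (- (nu * s)) * kummerU a b (z * s) < exp (- (nu * r)) * kummerU a b (z * r).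
Proof.
  intros Ha Hnu Hz Hr Hrs.
  assert (Hexp : exp (- (nu * s)) < exp (- (nu * r))) by (apply exp_increasing; nra).
  pose proof (kummerU_antitone a b (z * r) (z * s) Ha ltac:(split; nra)).
  pose proof (kummerU_gt0 a b (z * r) Ha ltac:(nra)).
  pose proof (exp_pos (- (nu * s))).
  apply Rle_lt_trans with (exp (- (nu * s)) * kummerU a b (z * r)).
  - apply Rmult_le_compat_l; lra.
  - apply Rmult_lt_compat_r; assumption.
Qed.

Lemma lt_sqrt_sq_add (k d : R) : 0 <= k -> 0 < d -> k < sqrt (k ^ 2 + d).
Proof.
  intros Hk Hd. rewrite <- (sqrt_pow2 k Hk) at 1.
  pose proof (pow2_ge_0 k). apply sqrt_lt_1; lra.
Qed.

Theorem mainTheorem1 (kappa theta sigma chi gamma : R)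
  (hkappa : 0 < kappa) (htheta : 0 < theta) (hsigma : 0 < sigma)
  (hgamma : 0 < gamma) (hchi : gamma < chi) :
  let xi := sqrt (kappa ^ 2 + 2 * sigma ^ 2 * (chi - gamma)) in
  let alpha := kappa * theta / sigma ^ 2 * (1 - kappa / xi) in
  let beta := 2 * kappa * theta / sigma ^ 2 in
  let zeta := 2 * xi / sigma ^ 2 in
  let nu := alpha * zeta / beta in
  let u_plus := fun r => exp (- (nu * r)) * kummerM alpha beta (zeta * r) in
  let u_minus := fun r => exp (- (nu * r)) * kummerU alpha beta (zeta * r) in
  (forall r s, 0 < r -> r < s -> u_plus r < u_plus s) /\
  (forall r s, 0 < r -> r < s -> u_minus s < u_minus r).
Proof.
  intros xi alpha beta zeta nu u_plus u_minus.
  assert (Hs2 : 0 < sigma ^ 2) by (apply pow_lt; lra).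
  assert (Hxi : kappa < xi) by (apply lt_sqrt_sq_add; nra).
  assert (Hw : 0 < kappa * theta / sigma ^ 2) by (apply Rdiv_lt_0_compat; nra).
  assert (Hratio : 0 < kappa / xi < 1).
  { split; [apply Rdiv_lt_0_compat; lra|]. apply Rlt_div_l; lra. }
  assert (Ha : 0 < alpha) by (apply Rmult_lt_0_compat; lra).
  assert (Hab : alpha < beta).
  { replace beta with (2 * (kappa * theta / sigma ^ 2)) by (unfold beta; field; lra).
    unfold alpha. nra. }
  assert (Hz : 0 < zeta) by (apply Rdiv_lt_0_compat; lra).
  assert (Hnu : 0 < nu) by (apply Rdiv_lt_0_compat; nra).
  split; intros r s Hr Hrs.
  - apply exp_kummerM_increasing; assumption.
  - apply exp_kummerU_decreasing; assumption.
Qed.
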